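(* Let $m\ge2$ be even and let $E_{\mathrm{hsc},m}$ be the $m\times 2$ matrix whose $j$-th row is $(\cos(j\pi/m),\sin(j\pi/m))$, $j=1,\dots,m$. Then for every integer $L\ge2$, $$\mathscr D_{\mathrm a}(E_{\mathrm{hsc},m},L)<\sqrt{2e}\,m\,L^{-m/2}.$$
   Context: For a $k\times m$ matrix $F$, finite $\mathscr A\subset\mathbb{R}$ and bounded $\mathscr X\subset\mathbb{R}^k$, $\mathscr D_{\mathrm s}(F,\mathscr A,\mathscr X):=\sup_{x\in\mathscr X}\inf_{q\in\mathscr A^m}\|x-Fq\|_2$; for an $m\times k$ matrix $E$, $\mathscr D_{\mathrm a}(E,\mathscr A,\mathscr X):=\inf\{\mathscr D_{\mathrm s}(F,\mathscr A,\mathscr X):FE=I_k\}$; and $\mathscr D_{\mathrm a}(E,L):=\inf_{|\mathscr A|=L}\mathscr D_{\mathrm a}(E,\mathscr A,B_1)$ with $B_1$ the closed unit Euclidean ball of $\mathbb{R}^k$ (here $k=2$). *)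

From Stdlib Require Import Reals Lra Lia List Classical ClassicalEpsilon.
Open Scope R_scope.

Definition is_glb (S : R -> Prop) (v : R) : Prop :=
  (forall x, S x -> v <= x) /\ (forall w, (forall x, S x -> w <= x) -> w <= v).

(* supremum / infimum of a set of reals; default value 0 when it does not
   exist as a real number (never happens in the situations used below). *)
Definition Rsup (S : R -> Prop) : R :=
  proj1_sig (constructive_indefinite_description
    (fun v => is_lub S v \/ (~ (exists w, is_lub S w) /\ v = 0))
    (match classic (exists w, is_lub S w) with
     | or_introl H => match H with ex_intro _ w Hw => ex_intro _ w (or_introl Hw) end
     | or_intror H => ex_intro _ 0 (or_intror (conj H eq_refl))
     end)).

Definition Rinf (S : R -> Prop) : R :=
  proj1_sig (constructive_indefinite_description
    (fun v => is_glb S v \/ (~ (exists w, is_glb S w) /\ v = 0))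
    (match classic (exists w, is_glb S w) with
     | or_introl H => match H with ex_intro _ w Hw => ex_intro _ w (or_introl Hw) end
     | or_intror H => ex_intro _ 0 (or_intror (conj H eq_refl))
     end)).

Fixpoint sumR (n : nat) (f : nat -> R) : R :=
  match n with
  | O => 0
  | S n' => sumR n' f + f n'
  end.

Definition dist2 (x y : R * R) : R :=
  sqrt ((fst x - fst y) ^ 2 + (snd x - snd y) ^ 2).

Definition B1 (x : R * R) : Prop := (fst x) ^ 2 + (snd x) ^ 2 <= 1.

(* A 2 x m matrix F is a function F i j (i < 2, j < m); an m x 2 matrix E is
   a function E j k (j < m, k < 2).  Vectors q in A^m are functions q j, j < m. *)
Definition mulFq (m : nat) (F : nat -> nat -> R) (q : nat -> R) : R * R :=
  (sumR m (fun j => F 0%nat j * q j), sumR m (fun j => F 1%nat j * q j)).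

Definition left_inverse (m : nat) (F E : nat -> nat -> R) : Prop :=
  forall i k, (i < 2)%nat -> (k < 2)%nat ->
    sumR m (fun j => F i j * E j k) = if Nat.eqb i k then 1 else 0.

Definition D_s (m : nat) (F : nat -> nat -> R) (A : list R) (X : R * R -> Prop) : R :=
  Rsup (fun d => exists x, X x /\
    d = Rinf (fun e => exists q : nat -> R,
             (forall j, (j < m)%nat -> In (q j) A) /\ e = dist2 x (mulFq m F q))).

Definition D_a (m : nat) (E : nat -> nat -> R) (A : list R) (X : R * R -> Prop) : R :=
  Rinf (fun d => exists F, left_inverse m F E /\ d = D_s m F A X).

Definition D_aL (m : nat) (E : nat -> nat -> R) (L : nat) : R :=
  Rinf (fun d => exists A : list R, NoDup A /\ length A = L /\ d = D_a m E A B1).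

(* E_hsc,m : row j (1-based, j = 1..m) is (cos(j pi/m), sin(j pi/m));
   here rows are 0-indexed: row j is (cos((j+1) pi/m), sin((j+1) pi/m)). *)
Definition E_hsc (m : nat) : nat -> nat -> R :=
  fun j k => if Nat.eqb k 0 then cos (INR (S j) * PI / INR m)
             else sin (INR (S j) * PI / INR m).

From Pilot Require Import Defs.
From Stdlib Require Import Reals Lra Lia List Classical ClassicalEpsilon.
Open Scope R_scope.

(* Identify R^2 with C and write m = 2n.  Rows n..2n-1 of E_hsc are rows 0..n-1
   turned by a quarter, i.e. multiplied by i, so the real-linear map
   G q = sum_j L^j (q_j + i q_(n+j)) satisfies G (E x) = conj z * x, where
   z = sum_(j<n) L^j e_j and e_j is row j.  Since Im z > 0, F := G / conj z is a
   left inverse of E.  Over the centred alphabet of step d = 4|z| / L^n the balanced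
   base-L expansions sum_j L^j a_j form a grid of step d covering [-|z|, |z|], which
   contains both coordinates of conj z * x when |x| <= 1.  Hence conj z * x is within
   sqrt 2 * d/2 of some G q, and x is within 2 sqrt 2 / L^n of F q; finally
   2 sqrt 2 < sqrt (2e) m. *)

Lemma sumR_ext n f g : (forall j, (j < n)%nat -> f j = g j) -> sumR n f = sumR n g.
Proof.
  induction n as [|n IH]; intros H; simpl; [reflexivity|].
  rewrite IH by (intros; apply H; lia); rewrite H by lia; reflexivity.
Qed.

Lemma sumR_split a b f : sumR (a + b) f = sumR a f + sumR b (fun j => f (a + j)%nat).
Proof.
  induction b as [|b IH]; [rewrite Nat.add_0_r; simpl; ring|].
  rewrite Nat.add_succ_r; simpl; rewrite IH; ring.
Qed.

Lemma sumR_lin n a b f g :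
  sumR n (fun j => a * f j + b * g j) = a * sumR n f + b * sumR n g.
Proof. induction n as [|n IH]; simpl; [|rewrite IH]; ring. Qed.

Lemma sumR_opp n f : sumR n (fun j => - f j) = - sumR n f.
Proof. induction n as [|n IH]; simpl; [|rewrite IH]; ring. Qed.

Lemma sumR_zero n : sumR n (fun _ => 0) = 0.
Proof. induction n as [|n IH]; simpl; [|rewrite IH]; ring. Qed.

Lemma sumR_nonneg n f : (forall j, (j < n)%nat -> 0 <= f j) -> 0 <= sumR n f.
Proof.
  induction n as [|n IH]; intros H; simpl; [lra|].
  assert (0 <= sumR n f) by (apply IH; intros; apply H; lia).
  assert (0 <= f n) by (apply H; lia).
  lra.
Qed.

Lemma sumR_pos n f : (1 <= n)%nat -> (forall j, (j < n)%nat -> 0 < f j) -> 0 < sumR n f.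
Proof.
  intros Hn H; destruct n as [|n]; [lia|]; simpl.
  assert (0 <= sumR n f) by (apply sumR_nonneg; intros; left; apply H; lia).
  assert (0 < f n) by (apply H; lia).
  lra.
Qed.

Lemma sumR_geometric n x : sumR n (fun j => x ^ j) * (x - 1) = x ^ n - 1.
Proof. induction n as [|n IH]; simpl; [|rewrite Rmult_plus_distr_r, IH]; ring. Qed.

Lemma base_expansion L n K : (1 <= L)%nat -> (K < L ^ n)%nat ->
  exists k : nat -> nat, (forall j, (j < n)%nat -> (k j < L)%nat) /\
    INR K = sumR n (fun j => INR (k j) * INR L ^ j).
Proof.
  intros HL; revert K; induction n as [|n IH]; intros K HK.
  - exists (fun _ => 0%nat); split; [intros; lia|].
    simpl in HK; replace K with 0%nat by lia; reflexivity.
  - set (P := (L ^ n)%nat).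
    assert (HP : P <> 0%nat) by (apply Nat.pow_nonzero; lia).
    destruct (IH (K mod P)%nat) as [k [Hk Hsum]]; [apply Nat.mod_upper_bound; auto|].
    exists (fun j => if (j <? n)%nat then k j else (K / P)%nat); split.
    + intros j Hj; destruct (Nat.ltb_spec j n); [apply Hk; lia|].
      apply Nat.Div0.div_lt_upper_bound; simpl in HK; fold P in HK; nia.
    + simpl; rewrite Nat.ltb_irrefl.
      rewrite (sumR_ext n _ (fun j => INR (k j) * INR L ^ j)), <- Hsum.
      2:{ intros j Hj; destruct (Nat.ltb_spec j n); [reflexivity|lia]. }
      rewrite (Nat.div_mod K P HP) at 1.
      rewrite plus_INR, mult_INR; unfold P; rewrite pow_INR; ring.
Qed.

Lemma nearest_nat (u : R) (N : nat) : 0 <= u -> u + 1 <= INR N ->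
  exists K, (K < N)%nat /\ Rabs (u - INR K) <= 1 / 2.
Proof.
  intros Hu HN.
  destruct (archimed (u - 1 / 2)) as [Hz1 Hz2]; set (z := up (u - 1 / 2)) in *.
  assert (Hz0 : (0 <= z)%Z) by (assert (-1 < z)%Z by (apply lt_IZR; simpl; lra); lia).
  exists (Z.to_nat z).
  rewrite INR_IZR_INZ, Znat.Z2Nat.id by exact Hz0.
  split; [apply INR_lt; rewrite INR_IZR_INZ, Znat.Z2Nat.id by exact Hz0; lra|].
  apply Rabs_le; lra.
Qed.

Definition centered_alphabet (d : R) (L : nat) : list R :=
  map (fun k => d * (INR k - (INR L - 1) / 2)) (seq 0 L).

Lemma centered_alphabet_NoDup d L : d <> 0 -> NoDup (centered_alphabet d L).
Proof.
  intros Hd; apply NoDup_map_NoDup_ForallPairs; [|apply seq_NoDup].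
  intros u v _ _ Huv; apply INR_eq; apply Rmult_eq_reg_l in Huv; lra.
Qed.

Lemma centered_alphabet_length d L : length (centered_alphabet d L) = L.
Proof. unfold centered_alphabet; rewrite length_map, length_seq; reflexivity. Qed.

(* The expansions sum_j L^j a_j with digits a_j in the alphabet are exactly the
   points d (K - (L^n - 1)/2), K < L^n. *)
Lemma balanced_expansion (L n : nat) (d t : R) : (1 <= L)%nat -> 0 < d ->
  Rabs t <= (INR L ^ n - 1) * d / 2 ->
  exists a : nat -> R, (forall j, (j < n)%nat -> In (a j) (centered_alphabet d L)) /\
    Rabs (t - sumR n (fun j => INR L ^ j * a j)) <= d / 2.
Proof.
  intros HL Hd Ht; set (P := INR L ^ n) in *.
  assert (Hw : - ((P - 1) / 2) <= t / d <= (P - 1) / 2).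
  { assert (Htb : - ((P - 1) * d / 2) <= t <= (P - 1) * d / 2)
      by (split; [pose proof (Rle_abs (- t)); rewrite Rabs_Ropp in *|pose proof (Rle_abs t)]; lra).
    split; apply Rmult_le_reg_r with d; auto;
      replace (t / d * d) with t by (field; lra); lra. }
  destruct (nearest_nat (t / d + (P - 1) / 2) (L ^ n)) as [K [HK Hround]];
    [lra|rewrite pow_INR; fold P; lra|].
  destruct (base_expansion L n K HL HK) as [k [Hk HKsum]].
  exists (fun j => d * (INR (k j) - (INR L - 1) / 2)); split.
  { intros j Hj; apply in_map_iff; exists (k j); split; [reflexivity|].
    apply in_seq; specialize (Hk j Hj); lia. }
  assert (Hsum : sumR n (fun j => INR L ^ j * (d * (INR (k j) - (INR L - 1) / 2)))
                 = d * (INR K - (P - 1) / 2)).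
  { rewrite (sumR_ext n _ (fun j => d * (INR (k j) * INR L ^ j)
                                   + (- (d * (INR L - 1) / 2)) * INR L ^ j))
      by (intros; unfold Rdiv; ring).
    rewrite sumR_lin, <- HKsum.
    unfold P; rewrite <- (sumR_geometric n (INR L)).
    change (pow (INR L)) with (fun j => INR L ^ j); unfold Rdiv; ring. }
  rewrite Hsum.
  replace (t - d * (INR K - (P - 1) / 2)) with (d * (t / d + (P - 1) / 2 - INR K))
    by (field; lra).
  rewrite Rabs_mult, Rabs_right by lra; nra.
Qed.

(* With z = a + i b and R^2 read as C, these are x |-> conj z * x and y |-> y / conj z. *)
Definition mul_conj (a b : R) (x : R * R) : R * R :=
  (a * fst x + b * snd x, a * snd x - b * fst x).

Definition div_conj (a b : R) (y : R * R) : R * R :=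
  ((a * fst y - b * snd y) / (a ^ 2 + b ^ 2), (b * fst y + a * snd y) / (a ^ 2 + b ^ 2)).

Lemma mul_conj_norm a b x :
  fst (mul_conj a b x) ^ 2 + snd (mul_conj a b x) ^ 2 = (a ^ 2 + b ^ 2) * (fst x ^ 2 + snd x ^ 2).
Proof. cbn [fst snd mul_conj]; ring. Qed.

Lemma Rabs_le_sqrt c D : c ^ 2 <= D -> Rabs c <= sqrt D.
Proof.
  intros Hc; rewrite <- (sqrt_pow2 (Rabs c)) by apply Rabs_pos.
  rewrite pow2_abs; apply sqrt_le_1_alt; exact Hc.
Qed.

Lemma mul_conj_coords_le a b x : Defs.B1 x ->
  Rabs (fst (mul_conj a b x)) <= sqrt (a ^ 2 + b ^ 2) /\
  Rabs (snd (mul_conj a b x)) <= sqrt (a ^ 2 + b ^ 2).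
Proof.
  unfold Defs.B1; intros Hx.
  pose proof (mul_conj_norm a b x) as Hnorm.
  pose proof (pow2_ge_0 (fst (mul_conj a b x))); pose proof (pow2_ge_0 (snd (mul_conj a b x))).
  pose proof (pow2_ge_0 (fst x)); pose proof (pow2_ge_0 (snd x)).
  split; apply Rabs_le_sqrt; nra.
Qed.

Lemma dist2_div_conj a b x y : 0 < a ^ 2 + b ^ 2 ->
  dist2 x (div_conj a b y) = dist2 (mul_conj a b x) y / sqrt (a ^ 2 + b ^ 2).
Proof.
  intros Hab; unfold dist2; rewrite <- sqrt_div_alt by exact Hab.
  f_equal; unfold mul_conj, div_conj; cbn [fst snd]; field; lra.
Qed.

Lemma dist2_le_coords x y e : Rabs (fst x - fst y) <= e -> Rabs (snd x - snd y) <= e ->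
  dist2 x y <= sqrt 2 * e.
Proof.
  intros H1 H2; unfold dist2.
  assert (He : 0 <= e) by (pose proof (Rabs_pos (fst x - fst y)); lra).
  rewrite <- (sqrt_pow2 e He), <- sqrt_mult_alt by lra; apply sqrt_le_1_alt.
  rewrite <- (pow2_abs (fst x - fst y)), <- (pow2_abs (snd x - snd y)).
  pose proof (Rabs_pos (fst x - fst y)); pose proof (Rabs_pos (snd x - snd y)); nra.
Qed.

Definition lo_weight (n L j : nat) : R := if (j <? n)%nat then INR L ^ j else 0.
Definition hi_weight (n L j : nat) : R := if (j <? n)%nat then 0 else INR L ^ (j - n).

Lemma sumR_lo_weight n L f :
  sumR (n + n) (fun j => lo_weight n L j * f j) = sumR n (fun j => INR L ^ j * f j).
Proof.
  rewrite sumR_split, (sumR_ext n (fun j => lo_weight n L (n + j) * f (n + j)%nat) (fun _ => 0)),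
    sumR_zero, Rplus_0_r.
  - apply sumR_ext; intros j Hj; unfold lo_weight; destruct (Nat.ltb_spec j n); [reflexivity|lia].
  - intros j _; unfold lo_weight; destruct (Nat.ltb_spec (n + j) n); [lia|ring].
Qed.

Lemma sumR_hi_weight n L f :
  sumR (n + n) (fun j => hi_weight n L j * f j) = sumR n (fun j => INR L ^ j * f (n + j)%nat).
Proof.
  rewrite sumR_split, (sumR_ext n (fun j => hi_weight n L j * f j) (fun _ => 0)),
    sumR_zero, Rplus_0_l.
  - apply sumR_ext; intros j _; unfold hi_weight; destruct (Nat.ltb_spec (n + j) n); [lia|].
    do 3 f_equal; lia.
  - intros j Hj; unfold hi_weight; destruct (Nat.ltb_spec j n); [ring|lia].
Qed.

Definition synthesis (n L : nat) (a b : R) (i j : nat) : R :=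
  let y := div_conj a b (lo_weight n L j, hi_weight n L j) in
  if Nat.eqb i 0 then fst y else snd y.

Lemma mulFq_synthesis n L a b q :
  mulFq (n + n) (synthesis n L a b) q =
  div_conj a b (sumR n (fun j => INR L ^ j * q j), sumR n (fun j => INR L ^ j * q (n + j)%nat)).
Proof.
  unfold mulFq, div_conj; cbn [fst snd]; f_equal.
  - rewrite (sumR_ext _ _ (fun j => a / (a ^ 2 + b ^ 2) * (lo_weight n L j * q j)
                                  + (- b / (a ^ 2 + b ^ 2)) * (hi_weight n L j * q j)))
      by (intros; unfold synthesis, div_conj, Rdiv; cbn [fst snd Nat.eqb]; ring).
    rewrite sumR_lin, sumR_lo_weight, sumR_hi_weight; unfold Rdiv; ring.
  - rewrite (sumR_ext _ _ (fun j => b / (a ^ 2 + b ^ 2) * (lo_weight n L j * q j)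
                                  + a / (a ^ 2 + b ^ 2) * (hi_weight n L j * q j)))
      by (intros; unfold synthesis, div_conj, Rdiv; cbn [fst snd Nat.eqb]; ring).
    rewrite sumR_lin, sumR_lo_weight, sumR_hi_weight; unfold Rdiv; ring.
Qed.

Lemma left_inverse_of_columns m F E :
  mulFq m F (fun j => E j 0%nat) = (1, 0) -> mulFq m F (fun j => E j 1%nat) = (0, 1) ->
  left_inverse m F E.
Proof.
  intros H0 H1 i k Hi Hk.
  destruct i as [|[|i]]; [| |lia]; (destruct k as [|[|k]]; [| |lia]);
    [ apply (f_equal fst H0) | apply (f_equal fst H1)
    | apply (f_equal snd H0) | apply (f_equal snd H1) ].
Qed.

Section QuarterTurnFrame.

Variables (n L : nat) (E : nat -> nat -> R).

Hypothesis E_quarter_turn : forall j, (j < n)%nat ->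
  E (n + j)%nat 0%nat = - E j 1%nat /\ E (n + j)%nat 1%nat = E j 0%nat.

Let a := sumR n (fun j => INR L ^ j * E j 0%nat).
Let b := sumR n (fun j => INR L ^ j * E j 1%nat).

Hypothesis frame_nondegenerate : 0 < a ^ 2 + b ^ 2.

Lemma synthesis_left_inverse : left_inverse (n + n) (synthesis n L a b) E.
Proof.
  apply left_inverse_of_columns; rewrite mulFq_synthesis; fold a b.
  - rewrite (sumR_ext n _ (fun j => - (INR L ^ j * E j 1%nat))), sumR_opp; fold b.
    2:{ intros j Hj; rewrite (proj1 (E_quarter_turn j Hj)); ring. }
    unfold div_conj; cbn [fst snd]; f_equal; field; lra.
  - rewrite (sumR_ext n _ (fun j => INR L ^ j * E j 0%nat)); fold a.
    2:{ intros j Hj; rewrite (proj2 (E_quarter_turn j Hj)); ring. }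
    unfold div_conj; cbn [fst snd]; f_equal; field; lra.
Qed.

Let spacing := 4 * sqrt (a ^ 2 + b ^ 2) / INR L ^ n.

Lemma synthesis_approx : (1 <= n)%nat -> (2 <= L)%nat -> forall x, Defs.B1 x ->
  exists q, (forall j, (j < n + n)%nat -> In (q j) (centered_alphabet spacing L)) /\
    dist2 x (mulFq (n + n) (synthesis n L a b) q) <= 2 * sqrt 2 / INR L ^ n.
Proof.
  intros Hn HL x Hx; set (r := sqrt (a ^ 2 + b ^ 2)); set (P := INR L ^ n) in *.
  assert (Hr : 0 < r) by (apply sqrt_lt_R0; exact frame_nondegenerate).
  assert (HP : 2 <= P).
  { assert (2 <= INR L) by (apply (le_INR 2); exact HL).
    apply Rle_trans with (INR L ^ 1); [simpl; lra|apply Rle_pow; [lra|exact Hn]]. }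
  assert (Hrange : r <= (P - 1) * spacing / 2).
  { unfold spacing; fold r P; apply Rmult_le_reg_r with P; [lra|].
    replace ((P - 1) * (4 * r / P) / 2 * P) with (2 * r * (P - 1)) by (field; lra); nra. }
  assert (Hspacing : 0 < spacing) by (unfold spacing; fold r P; apply Rdiv_lt_0_compat; lra).
  destruct (mul_conj_coords_le a b x Hx) as [Hfst Hsnd]; fold r in Hfst, Hsnd.
  destruct (balanced_expansion L n spacing (fst (mul_conj a b x))) as [a1 [Ha1 Herr1]];
    [lia|exact Hspacing|fold P; lra|].
  destruct (balanced_expansion L n spacing (snd (mul_conj a b x))) as [a2 [Ha2 Herr2]];
    [lia|exact Hspacing|fold P; lra|].
  exists (fun j => if (j <? n)%nat then a1 j else a2 (j - n)%nat); split.
  { intros j Hj; destruct (Nat.ltb_spec j n); [apply Ha1|apply Ha2]; lia. }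
  rewrite mulFq_synthesis, dist2_div_conj by exact frame_nondegenerate; fold r.
  rewrite (sumR_ext n _ (fun j => INR L ^ j * a1 j)),
          (sumR_ext n (fun j => _ * (if (n + j <? n)%nat then _ else _)) (fun j => INR L ^ j * a2 j)).
  2:{ intros j _; destruct (Nat.ltb_spec (n + j) n); [lia|]; do 3 f_equal; lia. }
  2:{ intros j Hj; destruct (Nat.ltb_spec j n); [reflexivity|lia]. }
  apply Rmult_le_reg_r with r; [exact Hr|].
  unfold Rdiv at 1; rewrite Rmult_assoc, Rinv_l, Rmult_1_r by lra.
  apply Rle_trans with (sqrt 2 * (spacing / 2)); [apply dist2_le_coords; assumption|].
  unfold spacing; fold r P; right; field; lra.
Qed.

End QuarterTurnFrame.

Lemma E_hsc_quarter_turn n j : (1 <= n)%nat ->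
  E_hsc (n + n) (n + j) 0%nat = - E_hsc (n + n) j 1%nat /\
  E_hsc (n + n) (n + j) 1%nat = E_hsc (n + n) j 0%nat.
Proof.
  intros Hn; unfold E_hsc; cbn [Nat.eqb].
  assert (Hangle : INR (S (n + j)) * PI / INR (n + n) = INR (S j) * PI / INR (n + n) + PI / 2).
  { replace (S (n + j)) with (n + S j)%nat by lia.
    assert (0 < INR n) by (apply lt_0_INR; lia).
    rewrite !plus_INR; field; lra. }
  rewrite Hangle, cos_plus, sin_plus, cos_PI2, sin_PI2; split; ring.
Qed.

Lemma E_hsc_sin_pos n j : (j < n)%nat -> 0 < E_hsc (n + n) j 1%nat.
Proof.
  intros Hj; unfold E_hsc; cbn [Nat.eqb]; apply sin_gt_0.
  - apply Rdiv_lt_0_compat; [apply Rmult_lt_0_compat; [apply lt_0_INR; lia|apply PI_RGT_0]|].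
    apply lt_0_INR; lia.
  - assert (Hle : INR (S j) <= INR n) by (apply le_INR; lia).
    assert (0 < INR n) by (apply lt_0_INR; lia).
    pose proof PI_RGT_0; rewrite plus_INR.
    apply Rmult_lt_reg_r with (INR n + INR n); [lra|].
    unfold Rdiv; rewrite Rmult_assoc, Rinv_l by lra; nra.
Qed.

(* [Rinf] and [Rsup] default to 0 on sets without a bound, hence the [Rmax 0]. *)
Lemma Rinf_le_Rmax (S : R -> Prop) x : S x -> Rinf S <= Rmax 0 x.
Proof.
  intros Hx; unfold Rinf.
  match goal with |- context [proj1_sig ?t] => destruct t as [v [[Hlow Hgreatest]|[Hnone Hv]]] end; simpl; [|rewrite Hv].
  - apply Rle_trans with x; [apply Hlow; exact Hx|apply Rmax_r].
  - apply Rmax_l.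
Qed.

Lemma Rsup_le_Rmax (S : R -> Prop) B : (forall y, S y -> y <= B) -> Rsup S <= Rmax 0 B.
Proof.
  intros HB; unfold Rsup.
  match goal with |- context [proj1_sig ?t] => destruct t as [v [[Hupper Hleast]|[Hnone Hv]]] end; simpl; [|rewrite Hv].
  - apply Rle_trans with B; [apply Hleast; exact HB|apply Rmax_r].
  - apply Rmax_l.
Qed.

Lemma D_aL_le m E L A F B :
  NoDup A -> length A = L -> left_inverse m F E -> 0 <= B ->
  (forall x, Defs.B1 x -> exists q, (forall j, (j < m)%nat -> In (q j) A) /\
                                    dist2 x (mulFq m F q) <= B) ->
  D_aL m E L <= B.
Proof.
  intros HA HlenA HF HB Happrox.
  apply Rle_trans with (Rmax 0 (D_a m E A Defs.B1));
    [apply Rinf_le_Rmax; exists A; auto|apply Rmax_lub; [exact HB|]].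
  apply Rle_trans with (Rmax 0 (D_s m F A Defs.B1));
    [apply Rinf_le_Rmax; exists F; auto|apply Rmax_lub; [exact HB|]].
  apply Rle_trans with (Rmax 0 B); [|apply Rmax_lub; lra].
  apply Rsup_le_Rmax; intros y [x [Hx ->]].
  destruct (Happrox x Hx) as [q [Hq Hdist]].
  apply Rle_trans with (Rmax 0 (dist2 x (mulFq m F q)));
    [apply Rinf_le_Rmax; exists q; auto|apply Rmax_lub; assumption].
Qed.

Lemma D_aL_E_hsc_le n L : (1 <= n)%nat -> (2 <= L)%nat ->
  D_aL (n + n) (E_hsc (n + n)) L <= 2 * sqrt 2 / INR L ^ n.
Proof.
  intros Hn HL.
  set (E := E_hsc (n + n)).
  set (a := sumR n (fun j => INR L ^ j * E j 0%nat)).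
  set (b := sumR n (fun j => INR L ^ j * E j 1%nat)).
  assert (HE : forall j, (j < n)%nat ->
            E (n + j)%nat 0%nat = - E j 1%nat /\ E (n + j)%nat 1%nat = E j 0%nat)
    by (intros; apply E_hsc_quarter_turn; exact Hn).
  assert (Hb : 0 < b).
  { apply sumR_pos; [exact Hn|intros j Hj].
    apply Rmult_lt_0_compat; [apply pow_lt, lt_0_INR; lia|apply E_hsc_sin_pos; exact Hj]. }
  assert (Hab : 0 < a ^ 2 + b ^ 2) by nra.
  assert (HP : 0 < INR L ^ n) by (apply pow_lt, lt_0_INR; lia).
  apply (D_aL_le _ _ _ (centered_alphabet (4 * sqrt (a ^ 2 + b ^ 2) / INR L ^ n) L)
                       (synthesis n L a b)).
  - apply centered_alphabet_NoDup.
    apply Rgt_not_eq, Rdiv_lt_0_compat; [apply Rmult_lt_0_compat; [lra|apply sqrt_lt_R0]|]; lra.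
  - apply centered_alphabet_length.
  - exact (synthesis_left_inverse n L E HE Hab).
  - unfold Rdiv; apply Rmult_le_pos; [pose proof (sqrt_pos 2); lra|left; apply Rinv_0_lt_compat, HP].
  - exact (synthesis_approx n L E Hab Hn HL).
Qed.

Theorem mainTheorem3 (m : nat) (Hm : (2 <= m)%nat) (Heven : Nat.Even m)
  (L : nat) (HL : (2 <= L)%nat) :
  D_aL m (E_hsc m) L < sqrt (2 * exp 1) * INR m * Rpower (INR L) (- (INR m / 2)).
Proof.
  destruct Heven as [n Hmn].
  replace m with (n + n)%nat in * by lia.
  assert (Hn : (1 <= n)%nat) by lia.
  assert (HP : 0 < INR L ^ n) by (apply pow_lt, lt_0_INR; lia).
  replace (Rpower (INR L) (- (INR (n + n) / 2))) with (/ INR L ^ n).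
  2:{ rewrite Rpower_Ropp, <- Rpower_pow by (apply lt_0_INR; lia).
      rewrite plus_INR; do 2 f_equal; field. }
  eapply Rle_lt_trans; [apply D_aL_E_hsc_le; assumption|].
  assert (Hsqrt : sqrt 2 < sqrt (2 * exp 1)).
  { apply sqrt_lt_1_alt; pose proof (exp_ineq1 1); lra. }
  assert (Hm2 : 2 <= INR (n + n)) by (apply (le_INR 2); lia).
  unfold Rdiv; apply Rmult_lt_compat_r; [apply Rinv_0_lt_compat; exact HP|].
  pose proof (sqrt_pos 2); nra.
Qed.
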